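(* Let $R$ be a generalized Rickart $*$-ring. Then the following are equivalent: (1) $R$ satisfies the parallelogram law; (2) whenever projections $e,f$ are in position $p'$, $e\sim f$.
   Context: A $*$-ring is an associative ring $R$ with an involution $x\mapsto x^*$ (additive, $(xy)^*=y^*x^*$, $x^{**}=x$). A projection is an element $e$ with $e=e^*=e^2$; projections are partially ordered by $e\le f$ iff $e=ef$, and $\wedge,\vee$ denote infimum and supremum in this poset. $e\sim f$ means there is $w\in R$ with $w^*w=e$, $ww^*=f$. For $a\in R$, $r(a)=\{b: ab=0\}$. $R$ is a generalized Rickart $*$-ring if for every $x$ there exist $n\ge1$ and a projection $g$ with $r(x^n)=gR$; such a ring has identity $1$. $R$ satisfies the parallelogram law if $e-e\wedge f\sim e\vee f-f$ for every pair of projections $e,f$ for which $e\wedge f$ and $e\vee f$ exist. Projections $e,f$ are in position $p'$ if $e\wedge(1-f)=0$ and $e\vee(1-f)=1$. *)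

From mathcomp Require Import all_boot all_algebra.
Set Implicit Arguments. Unset Strict Implicit. Unset Printing Implicit Defensive.
Import GRing.Theory.
Local Open Scope ring_scope.

Record is_involution (R : pzRingType) (star : R -> R) : Prop := {
  star_add : forall x y, star (x + y) = star x + star y;
  star_mul : forall x y, star (x * y) = star y * star x;
  star_invol : forall x, star (star x) = x }.

Section StarRing.
Variables (R : pzRingType) (star : R -> R).

Definition is_projection (e : R) : Prop := star e = e /\ e * e = e.

Definition proj_le (e f : R) : Prop := e = e * f.

Definition is_proj_meet (e f m : R) : Prop :=
  [/\ is_projection m, proj_le m e, proj_le m f &
      forall h, is_projection h -> proj_le h e -> proj_le h f -> proj_le h m].

Definition is_proj_join (e f j : R) : Prop :=
  [/\ is_projection j, proj_le e j, proj_le f j &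
      forall h, is_projection h -> proj_le e h -> proj_le f h -> proj_le j h].

Definition star_equiv (e f : R) : Prop :=
  exists w : R, star w * w = e /\ w * star w = f.

(* r(a) = g R  written pointwise *)
Definition right_annihilator_is (a g : R) : Prop :=
  forall b, a * b = 0 <-> exists c, b = g * c.

Definition generalized_rickart : Prop :=
  forall x : R, exists n : nat, exists g : R,
    (1 <= n)%N /\ is_projection g /\ right_annihilator_is (x ^+ n) g.

Definition parallelogram_law : Prop :=
  forall e f m j, is_projection e -> is_projection f ->
    is_proj_meet e f m -> is_proj_join e f j -> star_equiv (e - m) (j - f).

Definition position_p' (e f : R) : Prop :=
  is_proj_meet e (1 - f) 0 /\ is_proj_join e (1 - f) 1.

End StarRing.

From mathcomp Require Import all_boot all_algebra.
Set Implicit Arguments. Unset Strict Implicit. Unset Printing Implicit Defensive.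
Import GRing.Theory.
Local Open Scope ring_scope.

(* (1) => (2): position p' says that e /\ (1 - f) = 0 and e \/ (1 - f) = 1, so the
   parallelogram law gives e = e - 0 ~ 1 - (1 - f) = f.
   (2) => (1): for projections e, f with meet m and join j, the projections e - m
   and j - f are in position p'.  A projection below e - m and 1 - (j - f) lies
   below e and is orthogonal to m and to j - f, hence lies below f and m, so it is
   0.  A projection h above e - m and 1 - (j - f) lies above f and e and commutes
   with j - f and f, hence with j; then h j is a projection above e and f, so
   j <= h and 1 = (1 - (j - f)) + (j - f) <= h. *)

Section ProjectionLattice.
Variables (R : pzRingType) (star : R -> R).
Hypothesis starI : is_involution star.

Lemma starB x y : star (x - y) = star x - star y.
Proof. by have := star_add starI (x - y) y; rewrite subrK => ->; rewrite addrK. Qed.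

Lemma star1 : star 1 = 1.
Proof. by have := star_mul starI (star 1) 1; rewrite mulr1 star_invol // mulr1. Qed.

Lemma projection0 : is_projection star 0.
Proof. by split; [have := starB 0 0; rewrite !subrr | rewrite mulr0]. Qed.

Lemma projection1 : is_projection star 1.
Proof. by split; [exact: star1 | rewrite mulr1]. Qed.

Lemma proj_le1 (e : R) : proj_le e 1.
Proof. by rewrite /proj_le mulr1. Qed.

Lemma proj_le_trans (e f g : R) : proj_le e f -> proj_le f g -> proj_le e g.
Proof. by rewrite /proj_le => ef fg; rewrite {1}ef {1}fg mulrA -ef. Qed.

Lemma proj_leD (a b h : R) : proj_le a h -> proj_le b h -> proj_le (a + b) h.
Proof. by rewrite /proj_le mulrDl => <- <-. Qed.

Lemma proj_le_compl (h g : R) : proj_le h (1 - g) <-> h * g = 0.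
Proof.
rewrite /proj_le mulrBr mulr1; split=> [hE | ->]; last by rewrite subr0.
by rewrite -(subKr h (h * g)) -hE subrr.
Qed.

Lemma proj_leM (e a b : R) : proj_le e a -> proj_le e b -> proj_le e (a * b).
Proof. by rewrite /proj_le mulrA => <-. Qed.

Lemma proj_le_lmul e f : is_projection star e -> is_projection star f ->
  proj_le e f -> f * e = e.
Proof.
move=> [se _] [sf _] ef.
by rewrite -{1}se -sf -star_mul // -ef se.
Qed.

Lemma proj_le_comm p h : is_projection star p -> is_projection star h ->
  proj_le p h -> GRing.comm p h.
Proof. by move=> pp ph ph_le; rewrite /GRing.comm -ph_le proj_le_lmul. Qed.

Lemma projectionB a b : is_projection star a -> is_projection star b ->
  proj_le b a -> is_projection star (a - b).
Proof.
move=> pa pb ba; have ab := proj_le_lmul pb pa ba.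
case: pa pb => sa aa [sb bb]; split; first by rewrite starB sa sb.
by rewrite mulrBl !mulrBr aa bb ab -ba subrr subr0.
Qed.

Lemma projection_compl f : is_projection star f -> is_projection star (1 - f).
Proof. by move=> pf; apply: projectionB => //; [exact: projection1 | exact: proj_le1]. Qed.

Lemma proj_subr_le a b : is_projection star a -> is_projection star b ->
  proj_le b a -> proj_le (a - b) a.
Proof.
move=> [_ aa] [_ bb] ba.
by rewrite /proj_le mulrBl aa -ba.
Qed.

Lemma proj_subr_mul a b : is_projection star a -> is_projection star b ->
  proj_le b a -> (a - b) * b = 0.
Proof.
move=> pa pb ba; have ab := proj_le_lmul pb pa ba.
by case: pb => _ bb; rewrite mulrBl ab bb subrr.
Qed.

Section MeetJoin.
Variables e f m j : R.
Hypotheses (pe : is_projection star e) (pf : is_projection star f).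
Hypotheses (meet_efm : is_proj_meet star e f m) (join_efj : is_proj_join star e f j).

Lemma proj_meet_sub_compl0 : is_proj_meet star (e - m) (1 - (j - f)) 0.
Proof.
case: meet_efm => pm me _ m_glb; case: join_efj => pj ej fj _.
split; [exact: projection0 | by rewrite /proj_le mul0r | by rewrite /proj_le mul0r |].
move=> h ph h_em /proj_le_compl hjf.
have he : proj_le h e := proj_le_trans h_em (proj_subr_le pe pm me).
have hm0 : h * m = 0 by rewrite h_em -mulrA proj_subr_mul // mulr0.
have hj : proj_le h j := proj_le_trans he ej.
have hf : proj_le h f by rewrite /proj_le {1}hj; apply/eqP; rewrite -subr_eq0 -mulrBr hjf.
by rewrite /proj_le mulr0 {1}(m_glb h ph he hf) hm0.
Qed.

Lemma proj_join_sub_compl1 : is_proj_join star (e - m) (1 - (j - f)) 1.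
Proof.
case: meet_efm => _ _ mf _; case: join_efj => pj ej fj j_lub.
have pjf := projectionB pj pf fj.
split; [exact: projection1 | exact: proj_le1 | exact: proj_le1 |].
move=> h ph em_h jfc_h.
have f_jf0 : f * (j - f) = 0 by case: pf => _ ff; rewrite mulrBr -fj ff subrr.
have fh : proj_le f h := proj_le_trans ((proj_le_compl _ _).2 f_jf0) jfc_h.
have eh : proj_le e h.
  by rewrite -(subrK m e); apply: proj_leD em_h (proj_le_trans mf fh).
have comm_jf : GRing.comm h (j - f).
  have := proj_le_comm (projection_compl pjf) ph jfc_h.
  by move/esym/(commrB (commr1 h)); rewrite subKr.
have comm_hj : GRing.comm h j.
  by rewrite -(subrK f j); apply: commrD comm_jf (esym (proj_le_comm pf ph fh)).
have phj : is_projection star (h * j).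
  case: ph pj => sh hh [sj jj]; split; first by rewrite star_mul // sj sh.
  by rewrite -mulrA (mulrA j) -comm_hj -mulrA jj mulrA hh.
have jh : proj_le j h.
  have := j_lub _ phj (proj_leM eh ej) (proj_leM fh fj).
  by rewrite /proj_le comm_hj mulrA; case: pj => _ ->.
rewrite -(subrK (j - f) 1).
by apply: proj_leD jfc_h (proj_le_trans (proj_subr_le pj pf fj) jh).
Qed.

End MeetJoin.
End ProjectionLattice.

Theorem mainTheorem17 (R : pzRingType) (star : R -> R) :
  is_involution star -> generalized_rickart star ->
  (parallelogram_law star <->
   (forall e f : R, is_projection star e -> is_projection star f ->
      position_p' star e f -> star_equiv star e f)).
Proof.
move=> starI _; split.
- move=> PL e f pe pf [meet0 join1].
  by have := PL e (1 - f) 0 1 pe (projection_compl starI pf) meet0 join1; rewrite subr0 subKr.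
- move=> p'_equiv e f m j pe pf meet_efm join_efj.
  case: (meet_efm) (join_efj) => pm me _ _ [pj _ fj _].
  apply: p'_equiv; [exact: projectionB | exact: projectionB |].
  split; [exact: proj_meet_sub_compl0 | exact: proj_join_sub_compl1].
Qed.
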